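(* Let $p$ be an odd prime with $p\equiv 1\pmod 8$. Then there exists a perfect $B[-1,3](p)$ set if and only if the multiplicative order $o(-\tfrac32)$ of $-3\cdot 2^{-1}\bmod p$ in $\mathbb{Z}_p^\ast$ is odd and $4$ divides the multiplicative order $o(2)$ of $2$ in $\mathbb{Z}_p^\ast$.
   Context: $\mathbb{Z}_p^\ast$ is the multiplicative group of nonzero residues modulo $p$, and $o(x)$ denotes the order of $x$ in this group. A set $B\subseteq\mathbb{Z}_p$ is a perfect $B[-1,3](p)$ set if every nonzero element of $\mathbb{Z}_p$ has a unique representation $ab \bmod p$ with $a\in\{-1,1,2,3\}$ and $b\in B$ (and $0$ has no such representation); equivalently $B\subseteq\mathbb{Z}_p^\ast$, $|B|=(p-1)/4$, and the sets $\{-b,b,2b,3b\}$, $b\in B$, partition $\mathbb{Z}_p^\ast$. *)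

From HB Require Import structures.
From mathcomp Require Import all_boot all_order all_algebra all_fingroup all_field.
Set Implicit Arguments. Unset Strict Implicit. Unset Printing Implicit Defensive.
Import GRing.Theory.
Local Open Scope ring_scope.

(* multiplicative order o(x) of x in the unit group F^* (0 if x is not a unit) *)
Definition mult_order (F : finFieldType) (x : F) : nat :=
  oapp (fun u : {unit F} => #[u]%g) 0%N (insub x).

Definition mults (F : finFieldType) : seq F := [:: -1; 1; 2%:R; 3%:R].

Definition perfect_B13 (F : finFieldType) (B : {set F}) : Prop :=
  (forall a b, a \in mults F -> b \in B -> a * b != 0) /\
  (forall x : F, x != 0 ->
     #|[set ab : F * F | [&& ab.1 \in mults F, ab.2 \in B & ab.1 * ab.2 == x]]| = 1%N).

From HB Require Import structures.
From mathcomp Require Import all_boot all_order all_algebra all_fingroup all_field.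
From mathcomp Require Import cyclic zify ring.
Import GRing.Theory Num.Theory.
Set Implicit Arguments. Unset Strict Implicit. Unset Printing Implicit Defensive.

(* Fix a generator g of F_p^* and write n = p - 1 = m * 2^s (m odd, s >= 3) and
   dlog for the discrete logarithm to base g.  Since o(g^k) = n / gcd(k, n), the
   right-hand side says exactly that 2^s divides dlog(-3/2) while 2^(s-1) does
   not divide dlog 2.

   Necessity (characters): a perfect set B tiles F_p^*, so for every character
   chi_j(x) = w_j^(dlog x), with w_j a primitive 2^(j+1)-th root of unity in algC
   (j < s), we get chi_j({-1,1,2,3}) * chi_j(B) = sum over F_p^* of chi_j = 0.
   If chi_j(B) = 0 for the levels j of a set S, then prod_(j in S) (X^(2^j) + 1)
   divides the generating polynomial of dlog B, so 2^|S| divides |B| = m 2^(s-2);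
   hence chi_j({-1,1,2,3}) = 2 + chi_j(2) + chi_j(3) (or chi_j(2) + chi_j(3) at
   the top level s - 1) vanishes for at least two levels. Below the top this
   forces chi_j(2) = -1, i.e. the 2-adic valuation of dlog 2 is j, so it happens
   for at most one j < s - 1; the top level then occurs too and yields
   2^s | dlog(-3/2), while the low level yields v_2(dlog 2) < s - 1.

   Sufficiency (construction): with v = v_2(dlog 2) < s - 1, the set of x whose
   dlog has bits v and s - 1 both clear is perfect: dividing by -1, 2, 3 shifts
   dlog x by n/2, -dlog 2 and n/2 - dlog 2 (mod 2^s), which flip bit s - 1,
   bit v, and both, so exactly one quotient x / a lands in the set. *)

Lemma logn2_quot d n : (0 < n)%N -> (d %| n)%N ->
  (logn 2 (n %/ d) + logn 2 d)%N = logn 2 n.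
Proof.
move=> n0 dn; have d0 : (0 < d)%N by apply: dvdn_gt0 dn.
by rewrite -lognM ?divnK // divn_gt0 // dvdn_leq.
Qed.

Lemma odd_logn2 x : (0 < x)%N -> odd x = (logn 2 x == 0)%N.
Proof.
move=> x0; rewrite -[odd x]negbK -dvdn2 -{1}(expn1 2) pfactor_dvdn //.
by case: logn.
Qed.

Lemma pow2_dvdn_gcd k e n : (0 < n)%N -> (k <= logn 2 n)%N ->
  (2 ^ k %| gcdn e n)%N = (2 ^ k %| e)%N.
Proof. by move=> n0 kn; rewrite dvdn_gcd [(2 ^ k %| n)%N]pfactor_dvdn // kn andbT. Qed.

(* n / gcd(e, n) (the order of g^e for g of order n) is odd iff the whole 2-part of n divides e. *)
Lemma odd_quot_gcd e n : (0 < n)%N ->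
  odd (n %/ gcdn e n) = (2 ^ logn 2 n %| e)%N.
Proof.
move=> n0; have d0 : (0 < gcdn e n)%N by rewrite gcdn_gt0 n0 orbT.
have q0 : (0 < n %/ gcdn e n)%N by rewrite divn_gt0 // dvdn_leq // dvdn_gcdr.
have val_split := logn2_quot n0 (dvdn_gcdr e n).
rewrite odd_logn2 // -(pow2_dvdn_gcd e n0 (leqnn _)) pfactor_dvdn //; apply/eqP/idP; lia.
Qed.

Lemma four_dvd_quot_gcd a n : (0 < n)%N ->
  (4 %| n %/ gcdn a n)%N = ~~ (2 ^ (logn 2 n).-1 %| a)%N.
Proof.
move=> n0; have d0 : (0 < gcdn a n)%N by rewrite gcdn_gt0 n0 orbT.
have q0 : (0 < n %/ gcdn a n)%N by rewrite divn_gt0 // dvdn_leq // dvdn_gcdr.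
have val_split := logn2_quot n0 (dvdn_gcdr a n).
rewrite -(pow2_dvdn_gcd a n0 (leq_pred _)) -[4%N]/(2 ^ 2)%N !pfactor_dvdn //.
apply/idP/negP; lia.
Qed.

Definition bit i k := odd (k %/ 2 ^ i).

Lemma bit_add_mul_pow2 i j k c : (i <= j)%N ->
  bit i (k + c * 2 ^ j) = bit i k (+) (odd c && (i == j)).
Proof.
move=> ij; rewrite /bit -(subnK ij) expnD mulnA divnDMl ?expn_gt0 // oddD oddM oddX.
by congr (_ (+) (_ && _)); apply/idP/eqP; lia.
Qed.

Lemma uniq_two_classes (T : eqType) (S : seq T) (P : pred T) : uniq S -> (2 <= size S)%N ->
  {in S &, forall i j, P i -> P j -> i = j} ->
  {in S &, forall i j, ~~ P i -> ~~ P j -> i = j} ->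
  has P S /\ has (predC P) S.
Proof.
move=> uS S2 uniqP uniqNP.
have atmost1 (Q : pred T) : {in S &, forall i j, Q i -> Q j -> i = j} -> (count Q S <= 1)%N.
  move=> uniqQ; rewrite -size_filter.
  case E: (filter Q S) => [|x r] //; rewrite -E.
  have xQ : x \in filter Q S by rewrite E mem_head.
  apply: (@uniq_leq_size _ _ [:: x]); first exact: filter_uniq.
  move=> y yQ; rewrite inE; apply/eqP.
  move: xQ yQ; rewrite !mem_filter => /andP[Qx Sx] /andP[Qy Sy]; exact: uniqQ.
have := count_predC P S; have := atmost1 P uniqP; have := atmost1 (predC P) uniqNP.
by rewrite !has_count; lia.
Qed.

Section FiniteFieldGenerator.
Local Open Scope ring_scope.
Variable F : finFieldType.
Local Notation n := #|F|.-1.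

Lemma card_pred_gt0 : (0 < n)%N.
Proof. by rewrite -ltnS prednK ?card_finNzRing_gt1 // ltnW ?card_finNzRing_gt1. Qed.

Lemma expf_card_pred (x : F) : x != 0 -> x ^+ n = 1.
Proof.
move=> x0; apply: (mulfI x0); rewrite -exprS prednK ?expf_card ?mulr1 //.
by apply: ltnW (card_finNzRing_gt1 F).
Qed.

Lemma exists_generator : exists g : F, n.-primitive_root g.
Proof.
pose rs := [seq x <- enum F | x != 0].
have: has n.-primitive_root rs.
  apply: has_prim_root card_pred_gt0 _ _ _.
  - by apply/allP => x; rewrite mem_filter unity_rootE => /andP[/expf_card_pred -> _].
  - by rewrite filter_uniq // enum_uniq.
  - rewrite -(cardC1 (0 : F)); apply: leq_trans (card_size rs); apply/eq_leq/eq_card => x.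
    by rewrite mem_filter mem_enum !inE andbT.
by case/hasP => g _ pg; exists g.
Qed.

Lemma mult_order_prim (x : F) d : d.-primitive_root x -> mult_order x = d.
Proof.
move=> px; have d0 := prim_order_gt0 px.
have x0 : x != 0 by rewrite (prim_root_eq0 px) -lt0n.
rewrite /mult_order; case: insubP => [u _ ux /= | ]; last by rewrite unitfE x0.
apply/eqP; rewrite eqn_dvd; apply/andP; split.
  by rewrite order_dvdn -val_eqE /= FinRing.val_unitX ux -(prim_order_dvd px).
rewrite (prim_order_dvd px) -ux -FinRing.val_unitX -[1]/(val (1%g : {unit F})).
by rewrite val_eqE -order_dvdn.
Qed.
End FiniteFieldGenerator.

Section DiscreteLog.
Local Open Scope ring_scope.
Variables (F : finFieldType) (g : F).
Local Notation n := #|F|.-1.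
Hypothesis gen_g : n.-primitive_root g.

Definition dlog (x : F) : nat := find (fun k => g ^+ k == x) (iota 0 n).

Lemma generator_neq0 : g != 0.
Proof. by rewrite (prim_root_eq0 gen_g) -lt0n card_pred_gt0. Qed.

Lemma expg_neq0 k : g ^+ k != 0.
Proof. by rewrite expf_neq0 // generator_neq0. Qed.

Lemma dlog_spec x : x != 0 -> (dlog x < n)%N /\ g ^+ dlog x = x.
Proof.
move=> x0; have [i ->] := prim_rootP gen_g (expf_card_pred x0).
have hasi : has (fun k => g ^+ k == g ^+ i) (iota 0 n).
  by apply/hasP; exists (val i); rewrite ?mem_iota //= add0n ltn_ord.
have lt_n : (dlog (g ^+ i) < n)%N by move: hasi; rewrite has_find size_iota.
by split=> //; have := nth_find 0 hasi; rewrite nth_iota // add0n => /eqP.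
Qed.

Lemma dlogK x : x != 0 -> g ^+ dlog x = x.
Proof. by case/dlog_spec. Qed.

Lemma dlog_exp k : dlog (g ^+ k) = (k %% n)%N.
Proof.
have [lt_n e] := dlog_spec (expg_neq0 k).
by move/eqP: e; rewrite (eq_prim_root_expr gen_g) modn_small // => /eqP.
Qed.

Lemma dlog_mul x y : x != 0 -> y != 0 -> dlog (x * y) = ((dlog x + dlog y) %% n)%N.
Proof. by move=> x0 y0; rewrite -{1}(dlogK x0) -{1}(dlogK y0) -exprD dlog_exp. Qed.

Lemma dlog1 : dlog 1 = 0%N.
Proof. by rewrite -(expr0 g) dlog_exp mod0n. Qed.

Lemma expg_dlog_inv x : x != 0 -> g ^+ (n - dlog x) = x^-1.
Proof.
move=> x0; have [lt_n gx] := dlog_spec x0.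
apply: (mulIf x0); rewrite mulVf // -[X in _ * X = _]gx -exprD subnK; last exact: ltnW.
exact: prim_expr_order gen_g.
Qed.

Lemma expg_half : ~~ odd n -> g ^+ (n %/ 2) = -1.
Proof.
move=> even_n; have n2 : n = (2 * (n %/ 2))%N by rewrite mulnC divnK ?dvdn2.
have sq1 : (g ^+ (n %/ 2)) ^+ 2 == 1 by rewrite -exprM mulnC -n2 (prim_expr_order gen_g).
have neq1 : g ^+ (n %/ 2) != 1.
  rewrite -(prim_order_dvd gen_g); apply/negP => /(dvdn_leq _).
  by have := card_pred_gt0 F; lia.
by move: sq1; rewrite sqrf_eq1 (negbTE neq1) => /eqP.
Qed.

Lemma mult_order_exp k : mult_order (g ^+ k) = (n %/ gcdn k n)%N.
Proof. exact/mult_order_prim/exp_prim_root. Qed.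

Lemma dlog_charM (R : pzRingType) (z : R) x y : z ^+ n = 1 -> x != 0 -> y != 0 ->
  z ^+ dlog (x * y) = z ^+ dlog x * z ^+ dlog y.
Proof. by move=> zn x0 y0; rewrite dlog_mul // expr_mod // exprD. Qed.

Lemma dlog_char_sum0 (R : idomainType) (z : R) : z ^+ n = 1 -> z != 1 ->
  \sum_(x | x != 0) z ^+ dlog x = 0.
Proof.
move=> zn z1; set S := \sum_(x | x != 0) z ^+ dlog x.
have shift : S = z * S.
  rewrite {1}/S (reindex_inj (mulfI generator_neq0)) /=.
  rewrite (eq_bigl (fun x => x != 0)); last by move=> x; rewrite mulf_eq0 negb_or generator_neq0.
  rewrite /S big_distrr /=; apply: eq_bigr => x x0.
  by rewrite dlog_charM ?generator_neq0 // -{1}[g]expr1 dlog_exp expr_mod ?expr1.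
apply/eqP; move/eqP: shift; rewrite -subr_eq0 -{1}[S]mul1r -mulrBl mulf_eq0.
by rewrite subr_eq0 eq_sym (negbTE z1).
Qed.

Lemma mult_order_dlog y : y != 0 -> mult_order y = (n %/ gcdn (dlog y) n)%N.
Proof. by move=> y0; rewrite -{1}(dlogK y0) mult_order_exp. Qed.

Lemma odd_order_dlog y : y != 0 ->
  odd (mult_order y) = (2 ^ logn 2 n %| dlog y)%N.
Proof. by move=> y0; rewrite mult_order_dlog // odd_quot_gcd // (card_pred_gt0 F). Qed.

Lemma four_dvd_order_dlog y : y != 0 ->
  (4 %| mult_order y)%N = ~~ (2 ^ (logn 2 n).-1 %| dlog y)%N.
Proof. by move=> y0; rewrite mult_order_dlog // four_dvd_quot_gcd // (card_pred_gt0 F). Qed.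
End DiscreteLog.

Section PerfectSets.
Local Open Scope ring_scope.
Variable F : finFieldType.
Hypothesis mults_uniq : uniq (mults F).

Lemma perfect_char_sum (R : comPzRingType) (B : {set F}) (chi : F -> R) :
  perfect_B13 B -> (forall a b, a != 0 -> b != 0 -> chi (a * b) = chi a * chi b) ->
  (\sum_(a <- mults F) chi a) * (\sum_(b in B) chi b) = \sum_(x | x != 0) chi x.
Proof.
move=> [nz tile] chiM.
rewrite big_distrl /= big_uniq //=.
under eq_bigr do rewrite big_distrr /=.
rewrite pair_big /= (partition_big (fun ab : F * F => ab.1 * ab.2) (fun x => x != 0)); last first.
  by move=> [a b] /andP[/= ha hb]; exact: nz.
apply: eq_bigr => x x0; have /eqP/cards1P[[a b] Sx] := tile x x0.
have : (a, b) \in [set (a, b)] by rewrite set11.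
rewrite -Sx inE /= => /and3P[ha hb /eqP hab].
rewrite (big_pred1 (a, b)) /=; last first.
  by move=> [a' b'] /=; move/setP: Sx => /(_ (a', b')); rewrite !inE /= andbA.
have [a0 b0] : a != 0 /\ b != 0.
  by split; apply: contraNneq (nz a b ha hb) => ->; rewrite ?mul0r ?mulr0.
by rewrite -hab chiM.
Qed.

Lemma perfect_card (B : {set F}) : perfect_B13 B -> (4 * #|B|)%N = #|F|.-1.
Proof.
move=> hB; have := @perfect_char_sum int B (fun _ => 1) hB (fun a b _ _ => esym (mulr1 1)).
rewrite /mults !big_cons big_nil sumr_const (eq_bigl (mem (predC1 (0 : F)))) //.
rewrite sumr_const cardC1 -[_ + _]/(4%:R : int) -natrM => /eqP.
by rewrite eqr_nat => /eqP.
Qed.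

Lemma perfect_B13_by_quotients (B : {set F}) :
  (forall a, a \in mults F -> a != 0) -> 0 \notin B ->
  (forall x, x != 0 -> exists2 a0, a0 \in mults F & x / a0 \in B /\
     forall a, a \in mults F -> x / a \in B -> a = a0) ->
  perfect_B13 B.
Proof.
move=> mults_neq0 B0 unique_quot; split.
  move=> a b am bB; apply: mulf_neq0; first exact: mults_neq0.
  by apply: contraTneq bB => ->.
move=> x x0; have [a0 a0m [a0B a0P]] := unique_quot x x0.
apply/eqP/cards1P; exists (a0, x / a0); apply/setP => -[a b].
rewrite in_set in_set1 /= xpair_eqE; apply/and3P/andP => [[am bB /eqP ab] | [/eqP-> /eqP->]].
  have ea : b = x / a by rewrite -ab mulrAC divff ?mul1r ?mults_neq0.
  have aa0 : a = a0 by apply: a0P; rewrite // -ea.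
  by rewrite ea aa0.
by split; rewrite // mulrC divfK ?mults_neq0.
Qed.
End PerfectSets.

Section PowerOfTwoRoots.
Local Open Scope ring_scope.
Variable R : idomainType.

Lemma prim_root_pow2_half j (z : R) :
  (2 ^ j.+1)%N.-primitive_root z -> z ^+ (2 ^ j) = -1.
Proof.
move=> pz; have sq1 : (z ^+ (2 ^ j)) ^+ 2 == 1.
  by rewrite -exprM mulnC -expnS (prim_expr_order pz).
have neq1 : z ^+ (2 ^ j) != 1.
  rewrite -(prim_order_dvd pz); apply/negP => /(dvdn_leq (expn_gt0 2 j)).
  by rewrite expnS; have := expn_gt0 2 j; lia.
by move: sq1; rewrite sqrf_eq1 (negbTE neq1) => /eqP.
Qed.

Lemma prim_root_pow2_other_level i k (z : R) : 2%:R != 0 :> R ->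
  (2 ^ k.+1)%N.-primitive_root z -> i != k -> z ^+ (2 ^ i) + 1 != 0.
Proof.
move=> two0 pz ik; apply/negP; rewrite addr_eq0 => /eqP zi.
have d2 : (2 ^ k.+1 %| 2 ^ i.+1)%N.
  by rewrite (prim_order_dvd pz) expnS mulnC exprM zi sqrrN expr1n.
have d1 : ~~ (2 ^ k.+1 %| 2 ^ i)%N.
  rewrite (prim_order_dvd pz) zi; apply/negP => /eqP m1.
  by move: two0; rewrite mulr2n -{1}m1 addNr eqxx.
by rewrite !dvdn_Pexp2l // in d1 d2; move: ik d1 d2; lia.
Qed.
End PowerOfTwoRoots.

Section CyclotomicPow2.
Local Open Scope ring_scope.
(* The 2^(j+1)-th cyclotomic polynomial is X^(2^j) + 1, of degree 2^j. Hence an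
   integer polynomial of size at most 2^j vanishing at a primitive 2^(j+1)-th
   root of unity is zero. *)
Lemma small_poly_prim_root_pow2 (Q : {poly int}) j (z : algC) :
  (2 ^ j.+1)%N.-primitive_root z -> (size Q <= 2 ^ j)%N ->
  (map_poly intr Q).[z] = 0 -> Q = 0.
Proof.
move=> pz szQ Qz; apply/eqP; apply: contraT => Q0.
have [m [Dm _] dvm] := minCpolyP z.
have m_dvd : (m %| map_poly intr Q)%R.
  rewrite -dvm -map_poly_comp.
  have -> : map_poly (ratr \o intr) Q = map_poly intr Q :> {poly algC}.
    by apply: eq_map_poly => b /=; rewrite rmorph_int.
  exact/rootP.
have szQ' : size (map_poly (intr : int -> rat) Q) = size Q.
  by apply: size_map_inj_poly => //; exact: intr_inj.
have szm : size m = (2 ^ j).+1.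
  have := size_cyclotomic z (2 ^ j.+1)%N.
  rewrite -(minCpoly_cyclotomic pz) Dm size_map_poly totient_pfactor // mul1n.
  by [].
have Q'0 : map_poly (intr : int -> rat) Q != 0 by rewrite -size_poly_eq0 szQ' size_poly_eq0.
by have := dvdp_leq Q'0 m_dvd; rewrite szm szQ'; lia.
Qed.

Lemma cyclotomic_pow2_dvd (P : {poly int}) j (z : algC) :
  (2 ^ j.+1)%N.-primitive_root z -> (map_poly intr P).[z] = 0 ->
  exists Q : {poly int}, P = Q * ('X^(2 ^ j) + 1).
Proof.
move=> pz Pz; set d : {poly int} := 'X^(2 ^ j) + 1%:P.
have mond : d \is monic by rewrite monicXnaddC // expn_gt0.
have dz : (map_poly intr d).[z] = 0.
  rewrite rmorphD /= map_polyXn map_polyC hornerD hornerXn hornerC /=.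
  by rewrite (prim_root_pow2_half pz) rmorph1 addNr.
have Edp := Pdiv.IdomainMonic.divp_eq mond P.
exists (P %/ d); suff R0 : P %% d = 0 by rewrite {1}Edp R0 addr0.
apply: small_poly_prim_root_pow2 pz _ _.
  rewrite -ltnS; have <- : size d = (2 ^ j).+1 by rewrite size_XnaddC // expn_gt0.
  by rewrite ltn_modpN0 // monic_neq0.
move: Pz; rewrite {1}Edp rmorphD rmorphM /= hornerD hornerM dz mulr0 add0r.
by [].
Qed.

Lemma pow2_dvd_eval1 (S : seq nat) (z : nat -> algC) (P : {poly int}) :
  uniq S -> (forall i, i \in S -> (2 ^ i.+1)%N.-primitive_root (z i)) ->
  (forall i, i \in S -> (map_poly intr P).[z i] = 0) ->
  (2 ^+ size S %| P.[1])%Z.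
Proof.
elim: S P => [|i S IH] P /=; first by rewrite expr0 dvd1z.
move=> /andP[iS uS] prim root.
have [Q EQ] := cyclotomic_pow2_dvd (prim i (mem_head _ _)) (root i (mem_head _ _)).
have dQ : (2 ^+ size S %| Q.[1])%Z.
  apply: IH uS _ _ => k kS; first by apply: prim; rewrite inE kS orbT.
  have := root k; rewrite inE kS orbT EQ rmorphM /= hornerM => /(_ isT) /eqP.
  rewrite mulf_eq0 => /orP[/eqP // | ].
  rewrite rmorphD /= map_polyXn rmorph1 hornerD hornerXn hornerC.
  have ik : i != k by apply: contraNneq iS => ->.
  by rewrite (negbTE (prim_root_pow2_other_level _ (prim k _) ik)) ?inE ?kS ?orbT ?pnatr_eq0.
rewrite EQ hornerM hornerD hornerXn expr1n hornerC exprS mulrC.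
by apply: dvdz_mul => //; rewrite dvdzz.
Qed.
End CyclotomicPow2.

Section UnitCircle.
Local Open Scope ring_scope.
Variable C : numClosedFieldType.

Lemma norm_root_of_unity (z : C) k : (0 < k)%N -> z ^+ k = 1 -> `|z| = 1.
Proof.
move=> k0 zk; apply/eqP; rewrite -(pexpr_eq1 k0 (normr_ge0 z)) -normrX zk normr1.
by [].
Qed.

(* If 2 + z1 + z2 = 0 with z1, z2 on the unit circle then z1 = -1
   (equality case of the triangle inequality). *)
Lemma unit_circle_two_add (z1 z2 : C) : `|z1| = 1 -> `|z2| = 1 ->
  2%:R + z1 + z2 = 0 -> z1 = -1.
Proof.
move=> n1 n2 e.
have norm1 : z1 * z1^* = 1 by rewrite -normCK n1 expr1n.
have ez2 : z2 = - (2%:R + z1) by apply: (addrI (2%:R + z1)); rewrite e subrr.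
have norm2 : (2%:R + z1) * (2%:R + z1^*) = 1.
  have := normCK z2; rewrite n2 expr1n ez2 rmorphN rmorphD /= conjC_nat.
  by move=> h; rewrite [RHS]h; ring.
have sq0 : 2%:R * ((z1 + 1) * (z1^* + 1)) = 0.
  have -> : 2%:R * ((z1 + 1) * (z1^* + 1)) =
    z1 * z1^* + (2%:R + z1) * (2%:R + z1^*) - 2%:R by ring.
  by rewrite norm1 norm2; ring.
move: sq0 => /eqP; rewrite mulf_eq0 pnatr_eq0 /= mulf_eq0 !addr_eq0 => /orP[/eqP //|/eqP h].
by rewrite -[z1]conjCK h rmorphN /= rmorph1.
Qed.
End UnitCircle.

Section PrimeField.
Local Open Scope ring_scope.
Variables (p : nat) (hp : prime p) (hp8 : (p %% 8 = 1)%N).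
Local Notation F := 'F_p.
Local Notation n := #|F|.-1.

Lemma p_ge17 : (17 <= p)%N.
Proof.
have E := divn_eq p 8; rewrite hp8 in E.
by move: hp; rewrite E; case: (p %/ 8)%N => [|[|q]] //; lia.
Qed.

Lemma eight_dvd_order : (8 %| n)%N.
Proof. by rewrite card_Fp // {1}(divn_eq p 8) hp8 addn1 /= dvdn_mull. Qed.

Lemma natFp_neq0 k : (0 < k < p)%N -> k%:R != 0 :> F.
Proof.
move=> /andP[k0 kp]; rewrite -(dvdn_pcharf (pchar_Fp hp)).
by apply/negP => /(dvdn_leq k0); rewrite leqNgt kp.
Qed.

Lemma mults_Fp_neq0 a : a \in mults F -> a != 0.
Proof.
have := p_ge17 => p17.
by rewrite !inE => /or4P[] /eqP ->; rewrite ?oppr_eq0 ?oner_eq0 // natFp_neq0 //; lia.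
Qed.

Lemma mults_Fp_uniq : uniq (mults F).
Proof.
have := p_ge17 => p17.
have neq i j : (i < j < p)%N -> (i%:R : F) != j%:R.
  by move=> lt_ij; rewrite eq_sym -subr_eq0 -natrB ?natFp_neq0 //; lia.
have neg i : (i < p.-1)%N -> (-1 : F) != i%:R.
  by move=> lt_i; rewrite eq_sym -addr_eq0 natr1 natFp_neq0 //; lia.
have e1 : (-1 : F) != 1 by apply: (neg 1%N); lia.
have e2 : (-1 : F) != 2%:R by apply: neg; lia.
have e3 : (-1 : F) != 3%:R by apply: neg; lia.
have e4 : (1 : F) != 2%:R by apply: (neq 1%N); lia.
have e5 : (1 : F) != 3%:R by apply: (neq 1%N); lia.
have e6 : (2%:R : F) != 3%:R by apply: neq; lia.
by rewrite /mults /= !inE !negb_or e1 e2 e3 e4 e5 e6.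
Qed.

Local Notation s := (logn 2 n).

Lemma s_ge3 : (3 <= s)%N.
Proof. by rewrite -pfactor_dvdn ?eight_dvd_order // card_pred_gt0 ?card_Fp. Qed.

Variables (g : F) (gen_g : n.-primitive_root g).
Local Notation dlog := (dlog g).

Lemma two_neq0 : 2%:R != 0 :> F.
Proof. by apply: mults_Fp_neq0; rewrite !inE eqxx !orbT. Qed.

Lemma three_neq0 : 3%:R != 0 :> F.
Proof. by apply: mults_Fp_neq0; rewrite !inE eqxx !orbT. Qed.

Lemma neg_three_halves_neq0 : - 3%:R / 2%:R != 0 :> F.
Proof. by rewrite mulf_neq0 ?oppr_eq0 ?invr_eq0 ?three_neq0 ?two_neq0. Qed.

Lemma dlog_neg1 : dlog (-1) = (n %/ 2)%N.
Proof.
have n0 := card_pred_gt0 F; have n8 := eight_dvd_order.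
rewrite -(expg_half gen_g) ?dlog_exp ?modn_small -?dvdn2 //; last exact: dvdn_trans n8.
by rewrite ltn_Pdiv.
Qed.

Lemma logn2_half : logn 2 (n %/ 2) = s.-1.
Proof.
rewrite logn_div; last exact: dvdn_trans eight_dvd_order.
by rewrite [logn 2 2]logn_prime // subn1.
Qed.

Section Necessity.
Variable B : {set F}.
Hypothesis perfB : perfect_B13 B.
Variable zeta : algC.
Hypothesis prim_zeta : (2 ^ s)%N.-primitive_root zeta.

(* The character chi_j : x |-> w_j ^+ dlog x of order 2^(j+1), for j < s,
   where w_j is a primitive 2^(j+1)-th root of unity. *)
Definition level_root j := zeta ^+ (2 ^ s %/ 2 ^ j.+1)%N.
Definition chi j (x : F) := level_root j ^+ dlog x.

Lemma level_root_prim j : (j < s)%N -> (2 ^ j.+1)%N.-primitive_root (level_root j).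
Proof. by move=> js; exact (dvdn_prim_root prim_zeta (dvdn_exp2l 2 js)). Qed.

Lemma level_root_order j : (j < s)%N -> level_root j ^+ n = 1.
Proof.
move=> js; apply/eqP; rewrite -(prim_order_dvd (level_root_prim js)).
by apply: dvdn_trans (pfactor_dvdnn 2 n); rewrite dvdn_exp2l.
Qed.

Lemma level_root_neq1 j : (j < s)%N -> level_root j != 1.
Proof.
move=> js; rewrite -[level_root j]expr1 -(prim_order_dvd (level_root_prim js)).
by rewrite dvdn1 expnS; have := expn_gt0 2 j; lia.
Qed.

Lemma chiM j : (j < s)%N -> forall a b, a != 0 -> b != 0 ->
  chi j (a * b) = chi j a * chi j b.
Proof. by move=> js a b a0 b0; apply: dlog_charM => //; exact: level_root_order. Qed.

Lemma chi1 j : chi j 1 = 1.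
Proof. by rewrite /chi dlog1. Qed.

Lemma tiling_at_level j : (j < s)%N ->
  (\sum_(a <- mults F) chi j a) * (\sum_(b in B) chi j b) = 0.
Proof.
move=> js; rewrite (perfect_char_sum mults_Fp_uniq perfB (chiM js)).
exact: dlog_char_sum0 (level_root_order js) (level_root_neq1 js).
Qed.

Lemma mults_chi_sum j :
  \sum_(a <- mults F) chi j a = chi j (-1) + (1 + (chi j 2%:R + chi j 3%:R)).
Proof. by rewrite /mults !big_cons big_nil addr0 chi1. Qed.

Lemma chi_neg1 j : (j < s)%N -> chi j (-1) = if (j < s.-1)%N then 1 else -1.
Proof.
move=> js; rewrite /chi dlog_neg1.
have sq1 : (level_root j ^+ (n %/ 2)) ^+ 2 == 1.
  rewrite -exprM divnK ?level_root_order //; exact: dvdn_trans eight_dvd_order.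
have one_iff : (level_root j ^+ (n %/ 2) == 1) = (j < s.-1)%N.
  rewrite -(prim_order_dvd (level_root_prim js)) pfactor_dvdn ?logn2_half //.
  by rewrite divn_gt0 // (dvdn_leq (card_pred_gt0 F) (dvdn_trans _ eight_dvd_order)).
case: ifP => jlow; first by apply/eqP; rewrite one_iff.
by move: sq1; rewrite sqrf_eq1 one_iff jlow => /eqP.
Qed.

Definition dlog_poly : {poly int} := \sum_(b in B) 'X^(dlog b).

Lemma dlog_poly_eval (z : algC) :
  (map_poly intr dlog_poly).[z] = \sum_(b in B) z ^+ dlog b.
Proof.
rewrite /dlog_poly rmorph_sum horner_sum; apply: eq_bigr => b _.
by rewrite /= map_polyXn hornerXn.
Qed.

Lemma dlog_poly1 : dlog_poly.[1] = #|B|%:R.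
Proof.
rewrite /dlog_poly horner_sum (eq_bigr (fun _ => 1)) ?sumr_const //.
by move=> b _; rewrite hornerXn expr1n.
Qed.

Definition B_levels := [seq j <- iota 0 s | \sum_(b in B) chi j b == 0].
Definition M_levels := [seq j <- iota 0 s | \sum_(a <- mults F) chi j a == 0].

(* chi_j(B) vanishes for at most s - 2 levels, since 2^(#levels) divides
   #|B| = n / 4, whose 2-adic valuation is s - 2. *)
Lemma few_B_levels : (size B_levels <= s - 2)%N.
Proof.
have uS : uniq B_levels by rewrite filter_uniq // iota_uniq.
have dvd := pow2_dvd_eval1 (z := level_root) (P := dlog_poly) uS.
have absB : `|(#|B|%:R : int)|%N = #|B| by rewrite natz.
move: dvd; rewrite dlog_poly1 dvdzE abszX absB => dvd.
have cardB := perfect_card mults_Fp_uniq perfB.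
have B0 : (0 < #|B|)%N by move: (card_pred_gt0 F); rewrite -cardB; case: #|B|.
have logB : logn 2 #|B| = (s - 2)%N.
  by rewrite -cardB lognM // -[4%N]/(2 ^ 2)%N pfactorK // addKn.
rewrite -logB -pfactor_dvdn //; apply: dvd => j; rewrite mem_filter mem_iota add0n.
  by case/andP => _; exact: level_root_prim.
by case/andP => /eqP Bj _; rewrite dlog_poly_eval.
Qed.

Lemma many_M_levels : (2 <= size M_levels)%N.
Proof.
have := few_B_levels; rewrite /B_levels /M_levels !size_filter.
have cover : count (predU (fun j => \sum_(b in B) chi j b == 0)
    (fun j => \sum_(a <- mults F) chi j a == 0)) (iota 0 s) = s.
  rewrite -[RHS](size_iota 0) -count_predT; apply: eq_in_count => j.
  rewrite mem_iota add0n /= => js.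
  by have /eqP := tiling_at_level js; rewrite mulf_eq0 orbC.
have := count_predUI (fun j => \sum_(b in B) chi j b == 0)
  (fun j => \sum_(a <- mults F) chi j a == 0) (iota 0 s).
have := count_size (predI (fun j => \sum_(b in B) chi j b == 0)
  (fun j => \sum_(a <- mults F) chi j a == 0)) (iota 0 s).
by rewrite size_iota cover; have := s_ge3; lia.
Qed.

Lemma chi_neg1_valuation j y : (j < s)%N -> chi j y = -1 ->
  (2 ^ j %| dlog y)%N && ~~ (2 ^ j.+1 %| dlog y)%N.
Proof.
move=> js e; have pj := level_root_prim js; apply/andP; split.
  have : (2 ^ j.+1 %| dlog y * 2)%N.
    by rewrite (prim_order_dvd pj) exprM [_ ^+ dlog y]e sqrrN expr1n.
  by rewrite expnSr dvdn_pmul2r.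
rewrite (prim_order_dvd pj) [_ ^+ dlog y]e; apply/negP => /eqP m1.
by have := @pnatr_eq0 algC 2; rewrite mulr2n -{1}m1 addNr eqxx.
Qed.

(* A vanishing level j < s - 1 forces chi_j(2) = -1, because
   2 + chi_j(2) + chi_j(3) = 0 with both values on the unit circle. *)
Lemma low_M_level j : j \in M_levels -> (j < s.-1)%N -> chi j 2%:R = -1.
Proof.
rewrite mem_filter mem_iota add0n => /andP[/eqP M0 js] jlow.
have unit y : `|chi j y| = 1.
  by apply: (norm_root_of_unity (card_pred_gt0 F)); rewrite -exprM mulnC exprM level_root_order ?expr1n.
move: M0; rewrite mults_chi_sum chi_neg1 // jlow addrA -[1 + 1]/(2%:R) addrA.
exact: unit_circle_two_add.
Qed.

Lemma top_M_level : s.-1 \in M_levels -> (2 ^ s %| dlog (- 3%:R / 2%:R))%N.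
Proof.
rewrite mem_filter => /andP[/eqP M0 _].
have js : (s.-1 < s)%N by have := s_ge3; lia.
have top : level_root s.-1 = zeta.
  by rewrite /level_root prednK ?divnn ?expn_gt0 ?expr1 //; have := s_ge3; lia.
move: M0; rewrite mults_chi_sum chi_neg1 // ltnn addrA addNr add0r => /eqP.
rewrite addr_eq0 => /eqP chi3.
have inv2 : chi s.-1 2%:R^-1 * chi s.-1 2%:R = 1.
  by rewrite -chiM ?mulVf ?chi1 ?invr_eq0 ?two_neq0.
rewrite (prim_order_dvd prim_zeta) -top -/(chi s.-1 _) -mulN1r.
rewrite !chiM ?mulf_neq0 ?oppr_eq0 ?oner_eq0 ?invr_eq0 ?two_neq0 ?three_neq0 //.
by rewrite chi_neg1 // ltnn mulN1r -chi3 mulrC inv2.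
Qed.

Lemma perfect_necessary :
  (2 ^ s %| dlog (- 3%:R / 2%:R))%N /\ ~~ (2 ^ s.-1 %| dlog 2%:R)%N.
Proof.
have inS j : j \in M_levels -> (j < s)%N by rewrite mem_filter mem_iota add0n => /andP[].
have [/hasP[j jM jlow] /hasP[k kM ktop]] : has (fun j => j < s.-1)%N M_levels /\
    has (predC (fun j => j < s.-1)%N) M_levels.
  apply: (uniq_two_classes _ many_M_levels).
  - by rewrite filter_uniq // iota_uniq.
  - move=> j k jM kM jl kl.
    have /andP[dj nj] := chi_neg1_valuation (inS j jM) (low_M_level jM jl).
    have /andP[dk nk] := chi_neg1_valuation (inS k kM) (low_M_level kM kl).
    case: (ltngtP j k) => // [jk | kj].
      by case/negP: nj; apply: dvdn_trans dk; rewrite dvdn_exp2l.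
    by case/negP: nk; apply: dvdn_trans dj; rewrite dvdn_exp2l.
  - by move=> j k jM kM /= jt kt; have := inS j jM; have := inS k kM; lia.
have ks : k = s.-1 by move: ktop (inS k kM) => /=; lia.
split; first by apply: top_M_level; rewrite -ks.
have /andP[_ nj] := chi_neg1_valuation (inS j jM) (low_M_level jM jlow).
by apply: contra nj; apply: dvdn_trans; rewrite dvdn_exp2l.
Qed.
End Necessity.

Section Sufficiency.
Hypothesis top_cond : (2 ^ s %| dlog (- 3%:R / 2%:R))%N.
Hypothesis low_cond : ~~ (2 ^ s.-1 %| dlog 2%:R)%N.

Local Notation v := (logn 2 (dlog 2%:R)).

Definition inB k := ~~ bit v k && ~~ bit s.-1 k.
Definition Bset : {set F} := [set x | (x != 0) && inB (dlog x)].

Lemma dlog2_gt0 : (0 < dlog 2%:R)%N.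
Proof.
rewrite lt0n; apply: contraNneq low_cond => ->; exact: dvdn0.
Qed.

Lemma v_lt : (v < s.-1)%N.
Proof.
rewrite ltnNge; apply: contra low_cond => le_sv.
by apply: dvdn_trans (pfactor_dvdnn 2 _); rewrite dvdn_exp2l.
Qed.

Lemma n_odd_part : exists2 m, odd m & n = (m * 2 ^ s)%N.
Proof.
have [m] := pfactor_coprime (isT : prime 2) (card_pred_gt0 F).
by rewrite coprime2n; exists m.
Qed.

Lemma inB_add_pow2s k d : (2 ^ s %| d)%N -> inB (k + d) = inB k.
Proof.
have [s1 vs] : (s.-1 <= s)%N /\ (v <= s)%N by have := v_lt; lia.
case/dvdnP => c ->; rewrite /inB !bit_add_mul_pow2 //.
have [-> ->] : (s.-1 == s) = false /\ (v == s) = false by have := v_lt; have := s_ge3; lia.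
by rewrite !andbF !addbF.
Qed.

Lemma inB_dlog_mul x k : x != 0 -> inB (dlog (x * g ^+ k)) = inB (dlog x + k).
Proof.
move=> x0; rewrite (dlog_mul gen_g) ?(expg_neq0 gen_g) // (dlog_exp gen_g) modnDmr.
rewrite [in RHS](divn_eq (dlog x + k) n) [in RHS]addnC inB_add_pow2s //.
by apply: dvdn_mull; exact: pfactor_dvdnn.
Qed.

(* Adding n/2 = m * 2^(s-1) flips bit s - 1 and no lower bit. *)
Lemma bit_add_half i k : (i <= s.-1)%N -> bit i (k + n %/ 2) = bit i k (+) (i == s.-1).
Proof.
have [m om En] := n_odd_part.
have halve t : (0 < t)%N -> (m * 2 ^ t %/ 2 = m * 2 ^ t.-1)%N.
  by case: t => // t _; rewrite expnS mulnCA mulKn.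
have -> : (n %/ 2 = m * 2 ^ s.-1)%N by rewrite {1}En halve // (leq_trans _ s_ge3).
by move=> i_le; rewrite bit_add_mul_pow2 // om.
Qed.

(* n - dlog 2 = w * 2^v with w odd, so adding it flips bit v. *)
Lemma bit_add_inv2 k : bit v (k + (n - dlog 2%:R)) = ~~ bit v k.
Proof.
have [m om En] := n_odd_part.
have [w ow Ew] := pfactor_coprime (isT : prime 2) dlog2_gt0; rewrite coprime2n in ow.
have lt2 := (dlog_spec gen_g two_neq0).1.
have vs : (v <= s)%N by have := v_lt; lia.
have -> : (n - dlog 2%:R = (m * 2 ^ (s - v) - w) * 2 ^ v)%N.
  by rewrite mulnBl -mulnA -expnD subnK // -En -Ew.
rewrite bit_add_mul_pow2 // eqxx andbT oddB ?oddM ?oddX ?ow.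
  have -> : (s - v == 0)%N = false by have := v_lt; lia.
  by case: (bit v k); case: (odd m).
rewrite -(leq_pmul2r (expn_gt0 2 v)) -mulnA -expnD subnK // -En -Ew.
exact: ltnW lt2.
Qed.

(* The four quotients x / a, a in {-1,1,2,3}: relative to z = dlog x they shift
   bit (s-1) (a = -1), bit v (a = 2), or both (a = 3, using 2^s | dlog(-3/2)). *)
Lemma quotient_patterns x : x != 0 ->
  let z := dlog x in let z' := (z + (n - dlog 2%:R))%N in
  [/\ inB (dlog (x / 1)) = ~~ bit v z && ~~ bit s.-1 z,
      inB (dlog (x / -1)) = ~~ bit v z && bit s.-1 z,
      inB (dlog (x / 2%:R)) = bit v z && ~~ bit s.-1 z' &
      inB (dlog (x / 3%:R)) = bit v z && bit s.-1 z'].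
Proof.
move=> x0 z z'.
have [vs1 vs1'] : (v <= s.-1)%N /\ (v == s.-1) = false by have := v_lt; lia.
have half_v k : bit v (k + n %/ 2) = bit v k by rewrite bit_add_half // vs1' addbF.
have half_top k : bit s.-1 (k + n %/ 2) = ~~ bit s.-1 k by rewrite bit_add_half // eqxx addbT.
have gneg1 : g ^+ (n %/ 2) = -1 by rewrite -dlog_neg1 (dlogK gen_g) ?oppr_eq0 ?oner_eq0.
have ginv2 := expg_dlog_inv gen_g two_neq0.
have x3 : x / 3%:R != 0 by rewrite mulf_neq0 ?invr_eq0 ?three_neq0.
have div3 : x / 3%:R * g ^+ dlog (- 3%:R / 2%:R) = x * g ^+ (n %/ 2 + (n - dlog 2%:R)).
  rewrite (dlogK gen_g neg_three_halves_neq0) exprD gneg1 ginv2.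
  by field; rewrite three_neq0 two_neq0.
split.
- by rewrite divr1.
- by rewrite invrN1 -gneg1 inB_dlog_mul // /inB half_v half_top negbK.
- by rewrite -ginv2 inB_dlog_mul // /inB bit_add_inv2 negbK.
rewrite -(inB_add_pow2s _ top_cond) -inB_dlog_mul // div3 inB_dlog_mul //.
by rewrite [(n %/ 2 + _)%N]addnC addnA /inB half_v half_top bit_add_inv2 !negbK.
Qed.

(* Sufficiency: Bset is a perfect B[-1,3] set; the multiplier a0 is read off
   from bit v of dlog x and bit s - 1 of dlog x or of dlog (x / 2). *)
Lemma Bset_perfect : perfect_B13 Bset.
Proof.
apply: perfect_B13_by_quotients => [||x x0]; first exact: mults_Fp_neq0.
  by rewrite inE eqxx.
have memq a : a \in mults F -> (x / a \in Bset) = inB (dlog (x / a)).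
  by move=> am; rewrite inE mulf_neq0 ?invr_eq0 //; exact: mults_Fp_neq0.
have [q1 qm q2 q3] := quotient_patterns x0.
rewrite -!memq ?mem_seq4 ?eqxx ?orbT // in q1 qm q2 q3.
pose a0 : F := if bit v (dlog x) then (if bit s.-1 (dlog x + (n - dlog 2%:R)) then 3%:R else 2%:R)
           else if bit s.-1 (dlog x) then -1 else 1.
exists a0; first by rewrite /a0 /mults; repeat case: ifP => _; rewrite !inE eqxx ?orbT.
move: q1 qm q2 q3; rewrite /a0; case: (bit v (dlog x)); case: (bit s.-1 (dlog x));
  case: (bit s.-1 (dlog x + (n - dlog 2%:R))) => /= q1 qm q2 q3.
all: split; first by rewrite ?q1 ?qm ?q2 ?q3.
all: by move=> a; rewrite /mults mem_seq4 => /or4P[] /eqP ->; rewrite ?q1 ?qm ?q2 ?q3.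
Qed.
End Sufficiency.
End PrimeField.

Theorem theorem4p7 (p : nat) (hp : prime p) (hp8 : p %% 8 = 1) :
  (exists B : {set 'F_p}, perfect_B13 B) <->
  (odd (mult_order ((- 3%:R / 2%:R)%R : 'F_p)) /\ (4 %| mult_order ((2%:R)%R : 'F_p))%N).
Proof.
have [g gen_g] := exists_generator ('F_p : finFieldType).
rewrite (odd_order_dlog gen_g (neg_three_halves_neq0 hp hp8)).
rewrite (four_dvd_order_dlog gen_g (two_neq0 hp hp8)).
split=> [[B perfB] | [top_cond low_cond]].
  have [zeta prim_zeta] := C_prim_root_exists (expn_gt0 2 (logn 2 #|'F_p|.-1)).
  exact (perfect_necessary hp hp8 gen_g perfB prim_zeta).
by exists (Bset g); exact (Bset_perfect hp hp8 gen_g top_cond low_cond).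
Qed.
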